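(* Let $(g,q,w)$ be an $m\times n$ absorbing game with all entries of $g,q,w$ rational and with deterministic transitions, i.e. $q_{ij}\in\{0,1\}$ for all $(i,j)$. If $\min(m,n)<3$, then the limit value $v=\lim_{\lambda\to0}v_\lambda$ is a rational number. *)

From HB Require Import structures.
From mathcomp Require Import all_boot all_order all_algebra.
From mathcomp Require Import all_classical all_reals all_analysis.
Set Implicit Arguments. Unset Strict Implicit. Unset Printing Implicit Defensive.
Import Order.TTheory GRing.Theory Num.Theory.
Local Open Scope ring_scope.
Local Open Scope classical_set_scope.

Definition mixed (R : realType) (k : nat) (x : 'rV[R]_k) : Prop :=
  (forall i, 0 <= x 0 i) /\ \sum_i x 0 i = 1.

Definition is_matrix_game_value (R : realType) (m n : nat)
    (A : 'M[R]_(m, n)) (v : R) : Prop :=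
  (exists x : 'rV[R]_m, mixed x /\ forall j, v <= \sum_i x 0 i * A i j) /\
  (exists y : 'rV[R]_n, mixed y /\ forall i, \sum_j A i j * y 0 j <= v).

(* One-shot (Shapley) matrix of the lambda-discounted absorbing game (g,q,w)
   with continuation value v: playing (i,j) yields stage payoff g i j; with
   probability q i j play is absorbed and payoff w i j is received at every
   later stage; otherwise the game repeats. *)
Definition shapley_mx (R : realType) (m n : nat) (g q w : 'M[R]_(m, n))
    (lam v : R) : 'M[R]_(m, n) :=
  \matrix_(i, j) (lam * g i j + (1 - lam) * (q i j * w i j + (1 - q i j) * v)).

(* The lambda-discounted value v_lambda: the (unique) fixed point v of
   v = val(shapley_mx g q w lam v). *)
Definition disc_value (R : realType) (m n : nat) (g q w : 'M[R]_(m, n))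
    (lam : R) : R :=
  xget 0 [set v | is_matrix_game_value (shapley_mx g q w lam v) v].

(* The discounted value v_lam is the fixed point of the Shapley operator, a
   (1 - lam)-contraction; hence v_lam <= v as soon as some column strategy keeps every row
   of the Shapley matrix taken at v below v, and v <= v_lam as soon as no column strategy
   does.  Transposing if necessary, there are at most two columns, and a column strategy is
   a weight t on column 0.  With deterministic transitions, the excess of a row over v,
   divided by the per-stage probability that play stops, converges as lam -> 0 to an affine
   function of a rescaled parameter, in three regimes: t fixed in (0, 1), t of order lam,
   and 1 - t of order lam.  So the limit value is the least of the values of three games in
   which the row player faces a segment of affine payoffs; such a value is attained at an
   endpoint or where two lines cross, hence is rational when the data are. *)

From HB Require Import structures.
From mathcomp Require Import all_boot all_order all_algebra.
From mathcomp Require Import all_classical all_reals all_analysis.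
From mathcomp Require Import ring lra.
Import Order.TTheory GRing.Theory Num.Theory numFieldNormedType.Exports.
Local Open Scope classical_set_scope.
Local Open Scope ring_scope.

Definition line {R : pzRingType} (a b t : R) := t * a + (1 - t) * b.

Lemma line_swap {R : pzRingType} (a b t : R) : line a b t = line b a (1 - t).
Proof. by rewrite /line subKr addrC. Qed.

Lemma sum_delta {R : pzRingType} (I : finType) (i : I) (c : I -> R) :
  \sum_j (j == i)%:R * c j = c i.
Proof. by under eq_bigr do rewrite mulr_natl mulrb; rewrite -big_mkcond big_pred1_eq. Qed.

Definition pair_mix {R : pzRingType} {n} (al : R) (i k : 'I_n) : 'rV[R]_n :=
  \row_j (al * (j == i)%:R + (1 - al) * (j == k)%:R).

Lemma sum_pair_mix {R : pzRingType} {n} (al : R) (i k : 'I_n) (c : 'I_n -> R) :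
  \sum_j pair_mix al i k 0 j * c j = line (c i) (c k) al.
Proof.
under eq_bigr do rewrite mxE mulrDl -!mulrA.
by rewrite big_split -!mulr_sumr !sum_delta.
Qed.

Section RealFacts.
Context {R : realType}.

Lemma contraction_le0 {lam x : R} : 0 < lam -> x <= (1 - lam) * `|x| -> x <= 0.
Proof.
move=> lam0 x_le; rewrite leNgt; apply/negP => x0; move: x_le; rewrite gtr0_norm //.
have : 0 < lam * x by rewrite mulr_gt0.
lra.
Qed.

Lemma contraction_fixed_point (f : R -> R) (k : R) :
  0 <= k -> k < 1 -> (forall x y, `|f x - f y| <= k * `|x - y|) -> exists x, f x = x.
Proof.
move=> k0 k1 fk.
have ctr : is_contraction (totalfun_ [set: R^o] f).
  by exists (NngNum k0); split=> // -[x y] _ /=; exact: fk.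
have [x _ fx] := banach_fixed_point ctr closedT (ex_intro _ 0 I).
by exists x; rewrite {2}fx.
Qed.

Lemma exists_small {x y z : R} : 0 < x -> 0 < y -> 0 < z ->
  exists2 c, 0 < c & c <= x /\ z * c <= y.
Proof.
move=> x0 y0 z0; exists (Num.min x (y / z)); first by rewrite lt_min x0 divr_gt0.
split; first by rewrite ge_min lexx.
by rewrite mulrC -ler_pdivlMr // ge_min lexx orbT.
Qed.

Lemma near0_bounded (c : R) : 0 < c -> \forall lam \near (0 : R)^'+, 0 < lam <= c.
Proof.
move=> c0; near=> lam; apply/andP; split; near: lam; [exact: nbhs_right_gt | exact: nbhs_right_le].
Unshelve. all: by end_near.
Qed.

Lemma continuous_line (c d : R) : continuous (line c d).
Proof.
move=> t; apply: cvgD; apply: cvgM; try exact: cvg_cst; first exact: cvg_id.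
by apply: cvgB; [exact: cvg_cst | exact: cvg_id].
Qed.

Lemma dist_le_double {x y v C : R} : `|x - v| <= C -> `|y - v| <= C -> `|x - y| <= 2 * C.
Proof. by move=> xv yv; apply: le_trans (ler_distD v x y) _; rewrite (distrC v); lra. Qed.

Lemma dist_line_le {x y v C t : R} : `|x - v| <= C -> `|y - v| <= C -> 0 <= t <= 1 ->
  `|line x y t - v| <= C.
Proof.
rewrite !ler_distl /line => /andP[x1 x2] /andP[y1 y2] /andP[t0 t1].
have: t * (v - C) <= t * x <= t * (v + C) by rewrite !ler_wpM2l.
have: (1 - t) * (v - C) <= (1 - t) * y <= (1 - t) * (v + C) by rewrite !ler_wpM2l ?subr_ge0.
lra.
Qed.

Lemma norm_scale_le {p X c : R} : 0 <= p -> `|X| <= c -> `|p * X| <= p * c.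
Proof. by move=> p0 Xc; rewrite normrM ger0_norm // ler_wpM2l. Qed.

Lemma norm_combo_le {p q X Y c : R} : 0 <= p -> 0 <= q -> `|X| <= c -> `|Y| <= c ->
  `|p * X + q * Y| <= (p + q) * c.
Proof.
move=> p0 q0 Xc Yc; rewrite mulrDl (le_trans (ler_normD _ _)) //.
by rewrite lerD // norm_scale_le.
Qed.

Lemma lines_perturb {I : finType} {a b : I -> R} {K tau0 v d : R} : 0 < K -> 0 < d ->
    (forall i, `|a i - b i| <= K) -> 0 <= tau0 <= 1 ->
    (forall i, line (a i) (b i) tau0 <= v - 2 * d) ->
  exists2 eta, 0 < eta <= 1 / 4 & exists2 t, eta <= t <= 1 - eta &
    forall i, line (a i) (b i) t <= v - d.
Proof.
move=> K0 d0 abK /andP[tau0_ge0 tau0_le1] below.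
have quarter : (0 : R) < 1 / 4 by lra.
have [eta eta0 [eta_le etaK]] := exists_small quarter d0 K0.
exists eta; first by rewrite eta0.
have /andP[lo hi] : 0 <= (1 - 2 * eta) * tau0 <= 1 - 2 * eta.
  by apply/andP; split; [rewrite mulr_ge0 //; lra | rewrite ler_piMr //; lra].
exists ((1 - 2 * eta) * tau0 + eta); first by apply/andP; split; lra.
move=> i; have := below i.
have -> : line (a i) (b i) ((1 - 2 * eta) * tau0 + eta) =
    line (a i) (b i) tau0 + eta * ((1 - 2 * tau0) * (a i - b i)) by rewrite /line; ring.
suff : eta * ((1 - 2 * tau0) * (a i - b i)) <= K * eta by lra.
rewrite mulrC ler_wpM2r ?(ltW eta0) //; apply: le_trans (ler_norm _) _; rewrite normrM.
apply: le_trans (abK i); rewrite ler_piMl ?normr_ge0 // ler_norml; lra.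
Qed.

Lemma edge_parameter {lam tau eta : R} : 0 < lam -> 0 < eta -> 0 <= tau <= 1 - eta ->
  exists t, [/\ 0 <= t, t * (1 - tau) = lam * tau & (t + lam) * eta <= lam].
Proof.
move=> lam0 eta0 /andP[tau0 tau1]; have tau1' : 0 < 1 - tau by lra.
exists (lam * tau / (1 - tau)); split.
- by rewrite divr_ge0 ?mulr_ge0 //; lra.
- by rewrite divfK // gt_eqF.
rewrite -[X in _ <= X](_ : (lam * tau / (1 - tau) + lam) * (1 - tau) = lam); last by field; lra.
by rewrite ler_wpM2l ?addr_ge0 ?divr_ge0 ?mulr_ge0 //; lra.
Qed.

End RealFacts.

Section MixedStrategies.
Context {R : realType}.

Lemma pair_mix_mixed {n} (al : R) (i k : 'I_n) : 0 <= al <= 1 -> mixed (pair_mix al i k).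
Proof.
move=> /andP[al0 al1]; split=> [j|].
  by rewrite mxE addr_ge0 // mulr_ge0 ?subr_ge0 ?ler0n.
have := sum_pair_mix al i k (fun=> 1); under eq_bigr do rewrite mulr1.
by rewrite /line; lra.
Qed.

Lemma mixed_avg_ge {n} {y : 'rV[R]_n} {c : 'I_n -> R} {u} :
  mixed y -> (forall j, u <= c j) -> u <= \sum_j c j * y 0 j.
Proof.
move=> [y0 y1] uc; rewrite -[u]mulr1 -y1 mulr_sumr.
by apply: ler_sum => j _; apply: ler_wpM2r.
Qed.

Lemma mixed_avg_le {n} {y : 'rV[R]_n} {c : 'I_n -> R} {u} :
  mixed y -> (forall j, c j <= u) -> \sum_j c j * y 0 j <= u.
Proof.
move=> [y0 y1] cu; rewrite -[u]mulr1 -y1 mulr_sumr.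
by apply: ler_sum => j _; apply: ler_wpM2r.
Qed.

Lemma mixed_avg_shift {n} {y : 'rV[R]_n} (c : 'I_n -> R) d :
  mixed y -> \sum_j (c j + d) * y 0 j = \sum_j c j * y 0 j + d.
Proof.
by move=> [_ y1]; under eq_bigr do rewrite mulrDl; rewrite big_split /= -mulr_sumr y1 mulr1.
Qed.

Lemma mixed_le_max {n} {y : 'rV[R]_n.+1} (c : 'I_n.+1 -> R) :
  mixed y -> exists i, \sum_j c j * y 0 j <= c i.
Proof.
move=> ymix; have [i _ imax] := @arg_maxP _ _ _ ord0 predT c isT.
by exists i; apply: mixed_avg_le => // j; exact: imax.
Qed.

End MixedStrategies.

(** * Games against a segment of lines *)

Section LineGames.
Context {R : realType}.

Section Envelope.
Context {k : nat} (a b : 'I_k.+1 -> R).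

Definition envelope t := \big[Num.max/line (a ord0) (b ord0) t]_i line (a i) (b i) t.

Lemma le_envelope i t : line (a i) (b i) t <= envelope t.
Proof. by rewrite /envelope (bigD1 i) //= le_max lexx. Qed.

Lemma envelope_attained t : exists i, envelope t = line (a i) (b i) t.
Proof.
rewrite /envelope; elim/big_ind: _ => [|x y [i ->] [j ->]|i _]; try by eexists.
by case: (leP (line (a i) (b i) t) (line (a j) (b j) t)); eexists.
Qed.

Lemma continuous_envelope : continuous envelope.
Proof.
suff env_cont s : continuous (fun t =>
    \big[Num.max/line (a ord0) (b ord0) t]_(i <- s) line (a i) (b i) t) by exact: env_cont.
elim: s => [|i s IHs] t.
  by under eq_fun do rewrite big_nil; exact: continuous_line.
under eq_fun do rewrite big_cons.
exact: continuous_max (continuous_line _ _ t) (IHs t).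
Qed.

Lemma envelope_min_rising t : 0 <= t -> t < 1 ->
    (forall s, 0 <= s <= 1 -> envelope t <= envelope s) ->
  exists2 i, envelope t = line (a i) (b i) t & b i <= a i.
Proof.
move=> t0 t1 tmin; apply: contrapT => no_rising.
(* Just right of [t] every line is below [envelope t]: inactive lines by continuity,
   active ones because they all fall. *)
have below i : \forall s \near t^'+, line (a i) (b i) s < envelope t.
  have [inact|act] := ltrP (line (a i) (b i) t) (envelope t).
    by apply: cvg_within; exact: cvgr_lt (continuous_line _ _ t) _ inact.
  have {}act : line (a i) (b i) t = envelope t by apply/eqP; rewrite eq_le act le_envelope.
  have fall : a i < b i by rewrite ltNge; apply: contra_notN no_rising => ?; exists i.
  near=> s; rewrite -act -subr_gt0.
  have -> : line (a i) (b i) t - line (a i) (b i) s = (s - t) * (b i - a i) by rewrite /line; ring.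
  by rewrite mulr_gt0 ?subr_gt0 //; near: s; exact: nbhs_right_gt.
have [s [lt_s s1 ts]] : exists s, [/\ forall i, line (a i) (b i) s < envelope t, s <= 1 & t < s].
  apply: (@filter_ex _ (t^'+)); near=> s; split; near: s.
  - exact: filter_forall.
  - exact: nbhs_right_le.
  - exact: nbhs_right_gt.
have [j Fs] := envelope_attained s.
have := tmin s; rewrite Fs (ltW (le_lt_trans t0 ts)) s1 => /(_ isT).
by rewrite leNgt lt_s.
Unshelve. all: by end_near.
Qed.

End Envelope.

Lemma envelope_swap {k} (a b : 'I_k.+1 -> R) t : envelope b a (1 - t) = envelope a b t.
Proof. by rewrite /envelope -line_swap; apply: eq_bigr => i _; rewrite -line_swap. Qed.

Lemma envelope_min_falling {k} (a b : 'I_k.+1 -> R) t : 0 < t -> t <= 1 ->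
    (forall s, 0 <= s <= 1 -> envelope a b t <= envelope a b s) ->
  exists2 i, envelope a b t = line (a i) (b i) t & a i <= b i.
Proof.
move=> t0 t1 tmin.
have [||s /andP[s0 s1]|i] := envelope_min_rising b a (1 - t); try lra.
  by rewrite envelope_swap -[s](subKr 1) envelope_swap; apply: tmin; lra.
by rewrite envelope_swap -line_swap => ? ?; exists i.
Qed.

(* [V] is an endpoint value of a line or the value of line [i] where it crosses line [j]. *)
Definition breakpoint {k} (a b : 'I_k.+1 -> R) (V : R) :=
  exists i j, [\/ V = a i, V = b i |
    V = line (a i) (b i) ((b j - b i) / ((a i - b i) - (a j - b j)))].

Lemma line_pair_secures (ai bi aj bj t al V : R) :
    V = line ai bi t -> V = line aj bj t ->
    0 <= (1 - t) * line (ai - bi) (aj - bj) al -> t * line (ai - bi) (aj - bj) al <= 0 ->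
  V <= line ai aj al /\ V <= line bi bj al.
Proof.
move=> Vi Vj mu0 mu1.
have splitV : V = line (line ai bi t) (line aj bj t) al by rewrite -Vi -Vj /line; ring.
have : line ai aj al - V = (1 - t) * line (ai - bi) (aj - bj) al by rewrite splitV /line; ring.
have : line bi bj al - V = - (t * line (ai - bi) (aj - bj) al) by rewrite splitV /line; ring.
lra.
Qed.

(* At a minimiser of the envelope, either an endpoint or a rising and a falling line meet;
   the weight [al] balances their slopes. *)
Lemma envelope_min_balanced {k} (a b : 'I_k.+1 -> R) t : 0 <= t <= 1 ->
    (forall s, 0 <= s <= 1 -> envelope a b t <= envelope a b s) ->
  exists i j al, [/\ 0 <= al <= 1, envelope a b t = line (a i) (b i) t,
      envelope a b t = line (a j) (b j) t,
      0 <= (1 - t) * line (a i - b i) (a j - b j) al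
    & t * line (a i - b i) (a j - b j) al <= 0] /\ breakpoint a b (envelope a b t).
Proof.
move=> /andP[t0 t1] tmin; set V := envelope a b t.
have [t_eq1|t_lt1] := eqVneq t 1.
  subst t; have [j Vj fall] := envelope_min_falling _ _ _ ltr01 (lexx _) tmin.
  exists j, j, 1; split; first by rewrite ler01 lexx /line; split=> //; lra.
  by exists j, j; apply: Or31; rewrite /V Vj /line; ring.
have {t_lt1}t_lt1 : t < 1 by rewrite lt_neqAle t_lt1.
have [i Vi rise] := envelope_min_rising _ _ _ t0 t_lt1 tmin.
have [t_eq0|t_gt0] := eqVneq t 0.
  subst t; exists i, i, 1; split; first by rewrite ler01 lexx /line; split=> //; lra.
  by exists i, i; apply: Or32; rewrite /V Vi /line; ring.
have {t_gt0}t_gt0 : 0 < t by rewrite lt_neqAle eq_sym t_gt0.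
have [j Vj fall] := envelope_min_falling _ _ _ t_gt0 t1 tmin.
have tD : t * ((a i - b i) - (a j - b j)) = b j - b i by move: Vi Vj; rewrite /line; lra.
have [D0|Dpos] := eqVneq ((a i - b i) - (a j - b j)) 0.
  have [ai_bi aj_bj] : a i = b i /\ a j = b j by lra.
  exists i, j, 0; split; last by exists i, j; apply: Or32; rewrite /V Vi ai_bi /line; ring.
  by split=> //; rewrite ?ler01 ?lexx // aj_bj subrr /line; lra.
have {}Dpos : 0 < (a i - b i) - (a j - b j) by rewrite lt_neqAle eq_sym Dpos; lra.
set al := (b j - a j) / ((a i - b i) - (a j - b j)).
have mu0 : line (a i - b i) (a j - b j) al = 0 by rewrite /line /al; field; lra.
exists i, j, al; split; last by exists i, j; apply: Or33; rewrite /V Vi -tD mulfK ?gt_eqF.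
split=> //; rewrite ?mu0 ?mulr0 //.
by rewrite divr_ge0 ?ler_pdivrMr ?mul1r /=; lra.
Qed.

Lemma line_game_minimax {k} (a b : 'I_k.+1 -> R) : exists V,
  [/\ breakpoint a b V,
      exists2 t, 0 <= t <= 1 & forall i, line (a i) (b i) t <= V &
      exists2 x : 'rV_k.+1, mixed x &
        V <= \sum_i x 0 i * a i /\ V <= \sum_i x 0 i * b i].
Proof.
have [t] := EVT_min ler01 (continuous_subspaceT (continuous_envelope a b)).
rewrite in_itv /= => t01 tmin.
have {}tmin s : 0 <= s <= 1 -> envelope a b t <= envelope a b s.
  by move=> s01; apply: tmin; rewrite in_itv.
have [i [j [al [[al01 Vi Vj mu0 mu1] bp]]]] := envelope_min_balanced a b t t01 tmin.
exists (envelope a b t); split=> //; first by exists t => // i'; exact: le_envelope.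
exists (pair_mix al i j); first exact: pair_mix_mixed.
by rewrite !sum_pair_mix; exact: line_pair_secures Vi Vj mu0 mu1.
Qed.

Definition line_game_value {I : finType} (a b : I -> R) (V : R) :=
  (exists2 t, 0 <= t <= 1 & forall i, line (a i) (b i) t <= V) /\
  (forall t, 0 <= t <= 1 -> exists i, V <= line (a i) (b i) t).

Lemma line_game_value_exists {k} (a b : 'I_k.+1 -> R) :
  exists V, line_game_value a b V /\ breakpoint a b V.
Proof.
have [V [bp col_V [x xmix [xa xb]]]] := line_game_minimax a b.
exists V; split=> //; split=> // t /andP[t0 t1].
have [i imax] := mixed_le_max (fun i => line (a i) (b i) t) xmix.
exists i; apply: le_trans imax.
have -> : \sum_j line (a j) (b j) t * x 0 j = line (\sum_j x 0 j * a j) (\sum_j x 0 j * b j) t.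
  by rewrite /line !mulr_sumr -big_split /=; apply: eq_bigr => j _; ring.
have t1' : 0 <= 1 - t by lra.
have := ler_wpM2l t0 xa; have := ler_wpM2l t1' xb.
by rewrite /line; lra.
Qed.

End LineGames.

(** * Matrix games and discounted absorbing games *)

Section MatrixGames.
Context {R : realType}.

Definition row_secures {m n} (A : 'M[R]_(m, n)) (v : R) :=
  exists x : 'rV_m, mixed x /\ forall j, v <= \sum_i x 0 i * A i j.

Definition col_secures {m n} (A : 'M[R]_(m, n)) (v : R) :=
  exists y : 'rV_n, mixed y /\ forall i, \sum_j A i j * y 0 j <= v.

Lemma mixed_row_le {m n} {A B : 'M[R]_(m, n)} {y : 'rV_n} {d i} :
  mixed y -> (forall j, A i j <= B i j + d) ->
  \sum_j A i j * y 0 j <= \sum_j B i j * y 0 j + d.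
Proof.
move=> ymix AB; rewrite -(mixed_avg_shift _ _ ymix).
by apply: ler_sum => j _; apply: ler_wpM2r (AB j); case: ymix.
Qed.

Lemma secures_le {m n} {A B : 'M[R]_(m, n)} {v u d} :
  row_secures A v -> col_secures B u -> (forall i j, A i j <= B i j + d) -> v <= u + d.
Proof.
move=> [x [xmix xA]] [y [ymix yB]] AB.
apply: le_trans (mixed_avg_ge ymix xA) _.
have -> : \sum_j (\sum_i x 0 i * A i j) * y 0 j = \sum_i (\sum_j A i j * y 0 j) * x 0 i.
  under eq_bigr do rewrite mulr_suml.
  rewrite exchange_big; apply: eq_bigr => i _ /=.
  by rewrite mulr_suml; apply: eq_bigr => j _; ring.
apply: mixed_avg_le => // i.
by apply: le_trans (mixed_row_le ymix (AB i)) _; rewrite lerD2r.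
Qed.

Lemma value_opp_trmx {m n} (A : 'M[R]_(m, n)) v :
  is_matrix_game_value (\matrix_(j, i) - A i j) v -> is_matrix_game_value A (- v).
Proof.
move=> [[y [ymix yA]] [x [xmix xA]]]; split.
- exists x; split=> // j; have := xA j.
  by under eq_bigr do rewrite mxE mulNr mulrC; rewrite sumrN lerNl.
- exists y; split=> // i; have := yA i.
  by under eq_bigr do rewrite mxE mulrN mulrC; rewrite sumrN lerNr.
Qed.

End MatrixGames.

Section Discounted.
Context {R : realType} {m n : nat} (G Q W : 'M[R]_(m, n)).
Hypothesis Q_unit : forall i j, 0 <= Q i j <= 1.

Local Notation S := (shapley_mx G Q W).

Lemma shapley_mx_le lam v1 v2 i j : 0 <= lam <= 1 ->
  S lam v1 i j <= S lam v2 i j + (1 - lam) * `|v1 - v2|.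
Proof.
move=> /andP[lam0 lam1]; have /andP[q0 q1] := Q_unit i j.
have -> : S lam v1 i j = S lam v2 i j + (1 - lam) * ((1 - Q i j) * (v1 - v2)).
  by rewrite !mxE; ring.
rewrite lerD2l ler_wpM2l ?subr_ge0 //.
apply: le_trans (ler_norm _) _; rewrite normrM ger0_norm ?subr_ge0 //.
by rewrite ler_piMl ?normr_ge0 // lerBlDr lerDl.
Qed.

Lemma fixed_point_le {lam u v} : 0 < lam <= 1 ->
  is_matrix_game_value (S lam u) u -> col_secures (S lam v) v -> u <= v.
Proof.
move=> /andP[lam0 lam1] [row_u _] col_v; rewrite -subr_le0; apply: (contraction_le0 lam0).
have lam01 : 0 <= lam <= 1 by rewrite ltW.
have := secures_le row_u col_v (fun i j => shapley_mx_le lam u v i j lam01).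
lra.
Qed.

Lemma fixed_point_ge {lam u v} : 0 < lam <= 1 -> is_matrix_game_value (S lam u) u ->
  (forall y, mixed y -> exists i, v <= \sum_j S lam v i j * y 0 j) -> v <= u.
Proof.
move=> /andP[lam0 lam1] [_ [y [ymix yS]]] no_col; rewrite -subr_le0.
apply: (contraction_le0 lam0); have [i vi] := no_col y ymix.
have lam01 : 0 <= lam <= 1 by rewrite ltW.
have := le_trans vi (mixed_row_le ymix (fun j => shapley_mx_le lam v u i j lam01)).
have := yS i; lra.
Qed.

Lemma disc_value_fixed {lam u} : 0 < lam <= 1 ->
  is_matrix_game_value (S lam u) u -> disc_value G Q W lam = u.
Proof.
move=> lam01 fix_u; apply: xget_unique => // w fix_w.
apply/eqP; rewrite eq_le (fixed_point_le lam01 fix_w fix_u.2).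
exact: fixed_point_le lam01 fix_u fix_w.2.
Qed.

Lemma fixed_point_exists {lam} : 0 < lam <= 1 ->
    (forall v, exists V, is_matrix_game_value (S lam v) V) ->
  exists u, is_matrix_game_value (S lam u) u.
Proof.
move=> /andP[lam0 lam1] has_value.
pose val v := xget 0 [set V | is_matrix_game_value (S lam v) V].
have val_value v : is_matrix_game_value (S lam v) (val v).
  by have [V HV] := has_value v; exact: (xgetPex 0 (ex_intro _ V HV)).
have lam01 : 0 <= lam <= 1 by rewrite ltW.
have [u val_u] : exists u, val u = u.
  apply: (contraction_fixed_point _ (1 - lam)); rewrite ?subr_ge0 ?ltrBlDr ?ltrDl //.
  move=> x y; rewrite ler_norml.
  have [[rx _] [_ cx]] := (val_value x, val_value x).
  have [[ry _] [_ cy]] := (val_value y, val_value y).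
  have := secures_le rx cy (fun i j => shapley_mx_le lam x y i j lam01).
  have := secures_le ry cx (fun i j => shapley_mx_le lam y x i j lam01).
  by rewrite distrC; lra.
by exists u; rewrite -{2}val_u.
Qed.

End Discounted.

Section TwoColumnGames.
Context {R : realType} {m n : nat}.
Hypothesis n_le1 : (n <= 1)%N.

Lemma two_column_cases (j : 'I_n.+1) : j = ord0 \/ j = ord_max.
Proof.
case: j => [[|[|k]] lt]; [left | right | exfalso].
- exact: val_inj.
- by apply: val_inj => /=; apply/eqP; rewrite eqn_leq n_le1 andbT -ltnS.
- by move: lt; rewrite !ltnS => /leq_trans/(_ n_le1).
Qed.

Lemma mixed_two_columns (y : 'rV[R]_n.+1) :
  mixed y -> exists2 t, 0 <= t <= 1 & y = pair_mix t ord0 ord_max.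
Proof.
case: n n_le1 y => [|[|//]] _ y [y0 y1].
  exists 1; rewrite ?ler01 ?lexx //; apply/rowP => j; rewrite ord1 mxE.
  by move: y1; rewrite big_ord1 => ->; rewrite eqxx /=; ring.
move: y1; rewrite !big_ord_recl big_ord0 addr0 => y1.
exists (y 0 ord0); first by rewrite y0 /=; have := y0 (lift ord0 ord0); lra.
apply/rowP => j; rewrite mxE.
have [->|->] : j = ord0 \/ j = lift ord0 ord0.
  by case: j => [[|[|//]] lt]; [left | right]; exact: val_inj.
- by rewrite /= mulr1 mulr0 addr0.
- by rewrite /= mulr0 mulr1 add0r -y1 addrC addKr.
Qed.

Lemma two_column_value (A : 'M[R]_(m.+1, n.+1)) : exists V, is_matrix_game_value A V.
Proof.
have [V [_ [t t01 colV] [x xmix [xa xb]]]] :=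
  line_game_minimax (fun i => A i ord0) (fun i => A i ord_max).
exists V; split.
  by exists x; split=> // j; case: (two_column_cases j) => ->.
exists (pair_mix t ord0 ord_max); split; first exact: pair_mix_mixed.
by move=> i; under eq_bigr do rewrite mulrC; rewrite sum_pair_mix; exact: colV.
Qed.

End TwoColumnGames.

(** * Asymptotics of one row *)

Section RowAsymptotics.
Context {R : realType}.

Definition excess (lam v g : R) (a : bool) (w : R) :=
  lam * (g - v) + (1 - lam) * (a%:R * (w - v)).

Definition stop_rate (lam : R) (a0 a1 : bool) (t : R) := lam + (1 - lam) * line a0%:R a1%:R t.

(* Against a column strategy giving weight [t] in (0, 1) to column 0, the payoff of a row
   tends, as [lam] tends to 0, to [line (interior_end a0 a1 g0 w0 w1)
   (interior_end a1 a0 g1 w1 w0) t]: the play is absorbed by any absorbing column. *)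
Definition interior_end (a0 a1 : bool) (g0 w0 w1 : R) := if a0 then w0 else if a1 then w1 else g0.

Definition cell_payoff (a : bool) (g w : R) := if a then w else g.

Lemma dist_interior_end_le (a0 a1 : bool) {g0 w0 w1 v C : R} :
  `|g0 - v| <= C -> `|w0 - v| <= C -> `|w1 - v| <= C -> `|interior_end a0 a1 g0 w0 w1 - v| <= C.
Proof. by rewrite /interior_end; case: a0; case: a1. Qed.

Lemma dist_cell_payoff_le (a : bool) {g w v C : R} :
  `|g - v| <= C -> `|w - v| <= C -> `|cell_payoff a g w - v| <= C.
Proof. by rewrite /cell_payoff; case: a. Qed.

Lemma approx_sign {E k L v d : R} : 0 <= k -> `|E - k * (L - v)| <= k * d ->
  (L <= v - d -> E <= 0) /\ (v + d <= L -> 0 <= E).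
Proof.
rewrite ler_norml => k0 /andP[lo hi]; split=> HL.
  have : k * (L - v) <= k * (- d) by apply: ler_wpM2l => //; lra.
  lra.
have : k * d <= k * (L - v) by apply: ler_wpM2l => //; lra.
lra.
Qed.

Lemma stop_rate_ge (a0 a1 : bool) {lam t : R} : lam <= 1 -> 0 <= t <= 1 ->
  lam <= stop_rate lam a0 a1 t.
Proof.
move=> lam1 /andP[t0 t1]; rewrite /stop_rate lerDl mulr_ge0 ?subr_ge0 // /line.
by rewrite addr_ge0 // mulr_ge0 ?subr_ge0 ?ler0n.
Qed.

Lemma stop_rate_ge0 (a0 a1 : bool) {lam t : R} : 0 <= lam <= 1 -> 0 <= t <= 1 ->
  0 <= stop_rate lam a0 a1 t.
Proof. by move=> /andP[lam0 lam1] t01; apply: le_trans lam0 (stop_rate_ge _ _ lam1 t01). Qed.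

Section Row.
Variables (a0 a1 : bool).
Context {g0 g1 w0 w1 v C : R}.
Hypotheses (g0v : `|g0 - v| <= C) (g1v : `|g1 - v| <= C).
Hypotheses (w0v : `|w0 - v| <= C) (w1v : `|w1 - v| <= C).

Local Notation E lam t := (line (excess lam v g0 a0 w0) (excess lam v g1 a1 w1) t).
Local Notation end0 := (interior_end a0 a1 g0 w0 w1).
Local Notation end1 := (interior_end a1 a0 g1 w1 w0).
Local Notation cell1 := (cell_payoff a1 g1 w1).

Let end0v : `|end0 - v| <= C. Proof. exact: dist_interior_end_le. Qed.
Let end1v : `|end1 - v| <= C. Proof. exact: dist_interior_end_le. Qed.
Let C0 : 0 <= C. Proof. exact: le_trans (normr_ge0 _) g0v. Qed.

Lemma interior_error lam t :
  E lam t - stop_rate lam a0 a1 t * (line end0 end1 t - v) =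
    lam * (line g0 g1 t - line end0 end1 t).
Proof. by rewrite /excess /stop_rate /interior_end /line; case: a0; case: a1 => /=; ring. Qed.

Lemma interior_approx {lam t eta d : R} : 0 <= lam <= 1 / 2 -> 0 < eta -> eta <= t <= 1 - eta ->
    4 * C * lam <= eta * d ->
  `|E lam t - stop_rate lam a0 a1 t * (line end0 end1 t - v)| <= stop_rate lam a0 a1 t * d.
Proof.
move=> /andP[lam0 lam1] eta0 /andP[t0 t1] small; rewrite interior_error.
have d0 : 0 <= d by rewrite -(pmulr_rge0 _ eta0) (le_trans _ small) // !mulr_ge0.
have [no_abs|abs] := boolP (~~ (a0 || a1)).
  have -> : line g0 g1 t - line end0 end1 t = 0.
    by move: no_abs; rewrite /interior_end; case: a0; case: a1; rewrite // subrr.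
  by rewrite mulr0 normr0 mulr_ge0 // stop_rate_ge0 //; apply/andP; split; lra.
have kap : (1 - lam) * eta <= stop_rate lam a0 a1 t.
  by rewrite /stop_rate /line; move: abs; case: a0; case: a1 => //= _; rewrite ?mulr1n ?mulr0n; nra.
have GM : `|line g0 g1 t - line end0 end1 t| <= 2 * C.
  by apply: (dist_le_double (v := v)); apply: dist_line_le => //; lra.
apply: le_trans (norm_scale_le lam0 GM) _; apply: le_trans (ler_wpM2r d0 kap).
have : 0 <= (1 / 2 - lam) * (eta * d) by rewrite mulr_ge0 ?subr_ge0 // mulr_ge0 // ltW.
lra.
Qed.

Lemma edge_error_absorbing lam t tau : a1 ->
  E lam t - stop_rate lam a0 a1 t * (line end1 cell1 tau - v) =
    lam * (line g0 g1 t - w1) + ((1 - lam) * t) * (a0%:R * (w0 - w1)).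
Proof.
by move=> a1T; rewrite /excess /stop_rate /interior_end /cell_payoff /line a1T;
  case: a0 => /=; ring.
Qed.

Lemma edge_error_free lam t tau : ~~ a1 -> t * (1 - tau) = lam * tau ->
  E lam t - stop_rate lam a0 a1 t * (line end1 cell1 tau - v) =
    lam * (t * (g0 - line g1 end1 tau)).
Proof.
move=> /negbTE a1F ratio.
have -> : E lam t - stop_rate lam a0 a1 t * (line end1 cell1 tau - v) =
    lam * (t * (g0 - line g1 end1 tau)) + a0%:R * ((lam * tau - t * (1 - tau)) * (g1 - w0)).
  by rewrite /excess /stop_rate /interior_end /cell_payoff /line a1F;
    case: a0 => /=; ring.
by rewrite ratio subrr mul0r mulr0 addr0.
Qed.

(* The edge regime: [t] and [lam] tend to 0 together, [tau] being the relative weight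
   [t / (t + lam)] of column 0 against discounting. *)
Lemma edge_approx {lam t tau d : R} : 0 <= lam <= 1 -> 0 <= t <= 1 / 2 -> 0 <= tau <= 1 ->
    t * (1 - tau) = lam * tau -> 4 * C * (t + lam) <= d ->
  `|E lam t - stop_rate lam a0 a1 t * (line end1 cell1 tau - v)| <= stop_rate lam a0 a1 t * d.
Proof.
move=> /andP[lam0 lam1] /andP[t0 t1] tau01 ratio small.
have [Ct Cl lamt] : [/\ 0 <= C * t, 0 <= C * lam & 0 <= lam * t] by rewrite !mulr_ge0.
have d0 : 0 <= d by lra.
have [abs1|free1] : a1 \/ ~~ a1 by case: a1; [left | right].
  rewrite edge_error_absorbing //.
  have kap : 1 / 2 <= stop_rate lam a0 a1 t.
    by rewrite /stop_rate abs1 /line; case: a0 => /=; rewrite ?mulr1n ?mulr0n; nra.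
  have W : `|a0%:R * (w0 - w1)| <= 2 * C.
    case: a0; rewrite /= ?mulr1n ?mulr0n ?mul1r ?mul0r ?normr0 ?mulr_ge0 //.
    exact: dist_le_double w0v w1v.
  have G : `|line g0 g1 t - w1| <= 2 * C.
    by apply: (dist_le_double (v := v)) => //; apply: dist_line_le => //; lra.
  apply: le_trans (norm_combo_le lam0 _ G W) _; first by rewrite mulr_ge0 ?subr_ge0.
  have : 0 <= (stop_rate lam a0 a1 t - 1 / 2) * d by rewrite mulr_ge0 ?subr_ge0.
  have : 0 <= lam * t * C by rewrite !mulr_ge0.
  lra.
rewrite edge_error_free //.
have B : `|g0 - line g1 end1 tau| <= 2 * C.
  by apply: (dist_le_double (v := v)) => //; apply: dist_line_le.
apply: le_trans (norm_scale_le lam0 (norm_scale_le t0 B)) _.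
have : lam <= stop_rate lam a0 a1 t by apply: stop_rate_ge; lra.
have : 0 <= lam * (d - 2 * C * t) by rewrite mulr_ge0 ?subr_ge0 //; lra.
have : 0 <= (stop_rate lam a0 a1 t - lam) * d.
  by rewrite mulr_ge0 ?subr_ge0 //; apply: stop_rate_ge; lra.
lra.
Qed.

End Row.
End RowAsymptotics.

(** * The limit value *)

Section Regimes.
Context {R : realType} {I : finType}.
Variables (a0 a1 : I -> bool) (g0 g1 w0 w1 : I -> R).

Definition row_excess (lam v t : R) (i : I) :=
  line (excess lam v (g0 i) (a0 i) (w0 i)) (excess lam v (g1 i) (a1 i) (w1 i)) t.

Definition interior0 i := interior_end (a0 i) (a1 i) (g0 i) (w0 i) (w1 i).
Definition interior1 i := interior_end (a1 i) (a0 i) (g1 i) (w1 i) (w0 i).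
Definition cell1 i := cell_payoff (a1 i) (g1 i) (w1 i).

Lemma payoff_bound v : exists2 C, 0 < C & forall i,
  [/\ `|g0 i - v| <= C, `|g1 i - v| <= C, `|w0 i - v| <= C & `|w1 i - v| <= C].
Proof.
pose dev i := `|g0 i - v| + `|g1 i - v| + `|w0 i - v| + `|w1 i - v|.
have dev_ge0 i : 0 <= dev i by rewrite !addr_ge0.
exists (1 + \sum_i dev i); first by rewrite ltr_pwDl // sumr_ge0.
move=> i; rewrite (bigD1 i) //=.
have : 0 <= \sum_(j | j != i) dev j by rewrite sumr_ge0.
have := normr_ge0 (g0 i - v); have := normr_ge0 (g1 i - v).
have := normr_ge0 (w0 i - v); have := normr_ge0 (w1 i - v).
by rewrite /dev; split; lra.
Qed.

Lemma interior_upper {V v tau0 : R} : 0 <= tau0 <= 1 ->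
    (forall i, line (interior0 i) (interior1 i) tau0 <= V) -> V < v ->
  \forall lam \near 0^'+, exists2 t, 0 <= t <= 1 & forall i, row_excess lam v t i <= 0.
Proof.
move=> tau01 below Vv.
have [C C0 HC] := payoff_bound v.
pose d := (v - V) / 2; have d0 : 0 < d by rewrite divr_gt0 // subr_gt0.
have {}below i : line (interior0 i) (interior1 i) tau0 <= v - 2 * d.
  by rewrite /d mulrC divfK // opprB addrC subrK.
have ends i : `|interior0 i - interior1 i| <= 2 * C.
  by have [? ? ? ?] := HC i; apply: (dist_le_double (v := v)); apply: dist_interior_end_le.
have [|eta /andP[eta0 eta_le] [t t_int t_below]] := lines_perturb _ d0 ends tau01 below.
  by rewrite mulr_gt0.
have [c c0 [c_half cC]] : exists2 c, 0 < c & c <= 1 / 2 /\ 4 * C * c <= eta * d.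
  by apply: exists_small; rewrite ?mulr_gt0 //; lra.
near=> lam.
have /andP[lam0 lamc] : 0 < lam <= c by near: lam; exact: near0_bounded.
exists t; first lra.
move=> i; have [g0v g1v w0v w1v] := HC i.
have lamC : 4 * C * lam <= eta * d by apply: le_trans cC; rewrite ler_wpM2l // mulr_ge0 // ltW.
have lam_half : 0 <= lam <= 1 / 2 by lra.
have kap0 : 0 <= stop_rate lam (a0 i) (a1 i) t by apply: stop_rate_ge0; lra.
have [nonpos _] := approx_sign kap0 (interior_approx _ _ g0v g1v w0v w1v lam_half eta0 t_int lamC).
exact/nonpos/t_below.
Unshelve. all: by end_near.
Qed.

Lemma edge_upper {V v tau0 : R} : 0 <= tau0 <= 1 ->
    (forall i, line (interior1 i) (cell1 i) tau0 <= V) -> V < v ->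
  \forall lam \near 0^'+, exists2 t, 0 <= t <= 1 & forall i, row_excess lam v t i <= 0.
Proof.
move=> tau01 below Vv.
have [C C0 HC] := payoff_bound v.
pose d := (v - V) / 2; have d0 : 0 < d by rewrite divr_gt0 // subr_gt0.
have {}below i : line (interior1 i) (cell1 i) tau0 <= v - 2 * d.
  by rewrite /d mulrC divfK // opprB addrC subrK.
have ends i : `|interior1 i - cell1 i| <= 2 * C.
  have [? ? ? ?] := HC i; apply: (dist_le_double (v := v)).
    exact: dist_interior_end_le.
  exact: dist_cell_payoff_le.
have [|eta /andP[eta0 eta_le] [tau tau_int tau_below]] := lines_perturb _ d0 ends tau01 below.
  by rewrite mulr_gt0.
have [c c0 [c_eta cC]] : exists2 c, 0 < c & c <= eta / 2 /\ 4 * C * c <= eta * d.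
  by apply: exists_small; rewrite ?mulr_gt0 ?divr_gt0 //; lra.
near=> lam.
have /andP[lam0 lamc] : 0 < lam <= c by near: lam; exact: near0_bounded.
have tau_le : 0 <= tau <= 1 - eta by apply/andP; split; lra.
have [t [t0 ratio t_lam]] := edge_parameter lam0 eta0 tau_le.
have lam_eta : 0 <= lam * eta by rewrite mulr_ge0 // ltW.
have t_half : 0 <= t <= 1 / 2.
  rewrite t0 -(ler_pM2r eta0).
  have : t * eta + lam * eta <= lam by rewrite -mulrDl.
  lra.
have small : 4 * C * (t + lam) <= d.
  have C4 : 0 <= 4 * C by rewrite mulr_ge0 // ltW.
  rewrite -(ler_pM2r eta0).
  have := ler_wpM2l C4 t_lam; have := le_trans (ler_wpM2l C4 lamc) cC.
  lra.
exists t; first lra.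
move=> i; have [g0v g1v w0v w1v] := HC i.
have lam01 : 0 <= lam <= 1 by lra.
have tau01' : 0 <= tau <= 1 by lra.
have kap0 : 0 <= stop_rate lam (a0 i) (a1 i) t by apply: stop_rate_ge0; lra.
have [nonpos _] :=
  approx_sign kap0 (edge_approx _ _ g0v g1v w0v w1v lam01 t_half tau01' ratio small).
exact/nonpos/tau_below.
Unshelve. all: by end_near.
Qed.

Lemma interior_lower {v d c : R} : 0 < d -> 0 < c ->
    (forall tau, 0 <= tau <= 1 -> exists i, v + d <= line (interior0 i) (interior1 i) tau) ->
  \forall lam \near 0^'+, forall t, c <= t <= 1 - c -> exists i, 0 <= row_excess lam v t i.
Proof.
move=> d0 c0 above.
have [C C0 HC] := payoff_bound v.
have [l l0 [l_half lC]] : exists2 l, 0 < l & l <= 1 / 2 /\ 4 * C * l <= c * d.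
  by apply: exists_small; rewrite ?mulr_gt0 //; lra.
near=> lam => t t_int.
have /andP[lam0 laml] : 0 < lam <= l by near: lam; exact: near0_bounded.
have [|i Hi] := above t; first lra.
exists i; have [g0v g1v w0v w1v] := HC i.
have lam_half : 0 <= lam <= 1 / 2 by lra.
have lamC : 4 * C * lam <= c * d by apply: le_trans lC; rewrite ler_wpM2l // mulr_ge0 // ltW.
have kap0 : 0 <= stop_rate lam (a0 i) (a1 i) t by apply: stop_rate_ge0; lra.
have [_ nonneg] := approx_sign kap0 (interior_approx _ _ g0v g1v w0v w1v lam_half c0 t_int lamC).
exact: nonneg.
Unshelve. all: by end_near.
Qed.

Lemma edge_lower {v d : R} : 0 < d ->
    (forall tau, 0 <= tau <= 1 -> exists i, v + d <= line (interior1 i) (cell1 i) tau) ->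
  exists2 c, 0 < c &
    \forall lam \near 0^'+, forall t, 0 <= t <= c -> exists i, 0 <= row_excess lam v t i.
Proof.
move=> d0 above.
have [C C0 HC] := payoff_bound v.
have [c c0 [c_half cC]] : exists2 c, 0 < c & c <= 1 / 2 /\ 8 * C * c <= d.
  by apply: exists_small; rewrite ?mulr_gt0 //; lra.
exists c => //; near=> lam => t /andP[t0 tc].
have /andP[lam0 lamc] : 0 < lam <= c by near: lam; exact: near0_bounded.
have tl0 : 0 < t + lam by lra.
pose tau := t / (t + lam).
have ratio : t * (1 - tau) = lam * tau by rewrite /tau; field; lra.
have tau01 : 0 <= tau <= 1 by rewrite divr_ge0 ?ler_pdivrMr ?mul1r //; lra.
have [i Hi] := above tau tau01.
exists i; have [g0v g1v w0v w1v] := HC i.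
have lam01 : 0 <= lam <= 1 by lra.
have t_half : 0 <= t <= 1 / 2 by lra.
have small : 4 * C * (t + lam) <= d.
  have C8 : 0 <= 8 * C by rewrite mulr_ge0 // ltW.
  have := le_trans (ler_wpM2l C8 tc) cC; have := le_trans (ler_wpM2l C8 lamc) cC.
  lra.
have kap0 : 0 <= stop_rate lam (a0 i) (a1 i) t by apply: stop_rate_ge0; lra.
have [_ nonneg] :=
  approx_sign kap0 (edge_approx _ _ g0v g1v w0v w1v lam01 t_half tau01 ratio small).
exact: nonneg.
Unshelve. all: by end_near.
Qed.

End Regimes.

Section LimitValue.
Context {R : realType} {I : finType}.
Context {a0 a1 : I -> bool} {g0 g1 w0 w1 : I -> R} {VA VB VC : R}.
Hypothesis lineA : line_game_value (interior0 a0 a1 g0 w0 w1) (interior1 a0 a1 g1 w0 w1) VA.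
Hypothesis lineB : line_game_value (interior1 a0 a1 g1 w0 w1) (cell1 a1 g1 w1) VB.
Hypothesis lineC : line_game_value (interior0 a0 a1 g0 w0 w1) (cell1 a0 g0 w0) VC.

Local Notation E := (row_excess a0 a1 g0 g1 w0 w1).
Local Notation E' := (row_excess a1 a0 g1 g0 w1 w0).

Lemma row_excess_swap lam v t i : E' lam v t i = E lam v (1 - t) i.
Proof. exact: line_swap. Qed.

Lemma limit_upper v : Num.min VA (Num.min VB VC) < v ->
  \forall lam \near 0^'+, exists2 t, 0 <= t <= 1 & forall i, E lam v t i <= 0.
Proof.
rewrite !gt_min => /orP[vA | /orP[vB | vC]].
- by have [[tau tau01 below] _] := lineA; exact: interior_upper tau01 below vA.
- by have [[tau tau01 below] _] := lineB; exact: edge_upper tau01 below vB.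
have [[tau tau01 below] _] := lineC.
move: (edge_upper a1 a0 g1 g0 w1 w0 tau01 below vC); apply: filterS => lam [t /andP[t0 t1] neg].
exists (1 - t) => [|i]; first by apply/andP; split; lra.
by rewrite -row_excess_swap.
Qed.

Lemma limit_lower v : v < Num.min VA (Num.min VB VC) ->
  \forall lam \near 0^'+, forall t, 0 <= t <= 1 -> exists i, 0 <= E lam v t i.
Proof.
set d := Num.min VA (Num.min VB VC) - v => vmin.
have d0 : 0 < d by rewrite subr_gt0.
have [dA dB dC] : [/\ v + d <= VA, v + d <= VB & v + d <= VC].
  have -> : v + d = Num.min VA (Num.min VB VC) by rewrite /d addrC subrK.
  by split; rewrite !ge_min lexx /= ?orbT.
have above (J : finType) (a b : J -> R) V : line_game_value a b V -> v + d <= V ->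
    forall tau, 0 <= tau <= 1 -> exists j, v + d <= line (a j) (b j) tau.
  by move=> [_ ge_V] dV tau tau01; have [j Vj] := ge_V tau tau01; exists j; apply: le_trans Vj.
have [cB cB0 nearB] := edge_lower a0 a1 g0 g1 w0 w1 d0 (above _ _ _ _ lineB dB).
have [cC cC0 nearC] := edge_lower a1 a0 g1 g0 w1 w0 d0 (above _ _ _ _ lineC dC).
have c0 : 0 < Num.min cB cC by rewrite lt_min cB0 cC0.
have nearA := interior_lower a0 a1 g0 g1 w0 w1 d0 c0 (above _ _ _ _ lineA dA).
near=> lam => t /andP[t0 t1].
have HA : forall t, Num.min cB cC <= t <= 1 - Num.min cB cC -> exists i, 0 <= E lam v t i.
  by near: lam.
have HB : forall t, 0 <= t <= cB -> exists i, 0 <= E lam v t i by near: lam.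
have HC : forall t, 0 <= t <= cC -> exists i, 0 <= E' lam v t i by near: lam.
have [tB|tB] := lerP t cB; first by apply: HB; rewrite t0.
have [tC|tC] := lerP (1 - cC) t.
  have [|i Hi] := HC (1 - t); first lra.
  by exists i; rewrite -[t](subKr 1) -row_excess_swap.
apply: HA; apply/andP; split; first by rewrite ge_min (ltW tB).
have : Num.min cB cC <= cC by rewrite ge_min lexx orbT.
lra.
Unshelve. all: by end_near.
Qed.

End LimitValue.

Section Rationality.
Context {R : realType}.

Definition rational (x : R) := exists r : rat, x = ratr r.

Lemma rational_min (x y : R) : rational x -> rational y -> rational (Num.min x y).
Proof. by move=> rx ry; case: (leP x y). Qed.

Lemma rational_interior_end (a0 a1 : bool) (g0 w0 w1 : R) :
  rational g0 -> rational w0 -> rational w1 -> rational (interior_end a0 a1 g0 w0 w1).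
Proof. by rewrite /interior_end; case: a0; case: a1. Qed.

Lemma rational_cell_payoff (a : bool) (g w : R) :
  rational g -> rational w -> rational (cell_payoff a g w).
Proof. by rewrite /cell_payoff; case: a. Qed.

Lemma breakpoint_rational {k} (a b : 'I_k.+1 -> R) V :
  (forall i, rational (a i)) -> (forall i, rational (b i)) -> breakpoint a b V -> rational V.
Proof.
move=> ra rb [i [j []]] ->; [exact: ra | exact: rb |].
have [[ai ->] [bi ->]] := (ra i, rb i); have [[aj ->] [bj ->]] := (ra j, rb j).
exists (line ai bi ((bj - bi) / ((ai - bi) - (aj - bj)))).
by rewrite /line !(rmorphD, rmorphN, rmorphM, fmorphV, rmorph1).
Qed.

End Rationality.

Lemma zero_one_unit {R : realType} {x : R} : x = 0 \/ x = 1 -> 0 <= x <= 1.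
Proof. by case=> ->; rewrite ?lexx ?ler01. Qed.

Section TwoColumnLimit.
Context {R : realType} {m n : nat}.
Hypothesis n_le1 : (n <= 1)%N.
Variables (G Q W : 'M[R]_(m.+1, n.+1)).
Hypothesis Q01 : forall i j, Q i j = 0 \/ Q i j = 1.

Local Notation S := (shapley_mx G Q W).
Let absorbing j i := Q i j != 0.
Let g j i := G i j.
Let w j i := W i j.
Local Notation E :=
  (row_excess (absorbing ord0) (absorbing ord_max) (g ord0) (g ord_max) (w ord0) (w ord_max)).
Local Notation interior0 :=
  (interior0 (absorbing ord0) (absorbing ord_max) (g ord0) (w ord0) (w ord_max)).
Local Notation interior1 :=
  (interior1 (absorbing ord0) (absorbing ord_max) (g ord_max) (w ord0) (w ord_max)).
Local Notation cell0 := (cell1 (absorbing ord0) (g ord0) (w ord0)).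
Local Notation cell1 := (cell1 (absorbing ord_max) (g ord_max) (w ord_max)).

Let Q_unit i j : 0 <= Q i j <= 1 := zero_one_unit (Q01 i j).

Lemma shapley_mx_excess lam v i j : S lam v i j - v = excess lam v (G i j) (Q i j != 0) (W i j).
Proof. by rewrite mxE /excess; case: (Q01 i j) => ->; rewrite ?eqxx ?oner_neq0 /=; ring. Qed.

Lemma shapley_pair_mix lam v t i :
  \sum_j S lam v i j * pair_mix t ord0 ord_max 0 j - v = E lam v t i.
Proof.
under eq_bigr do rewrite mulrC.
by rewrite sum_pair_mix /row_excess -!shapley_mx_excess /line; ring.
Qed.

Lemma two_column_fixed_point {lam : R} : 0 < lam <= 1 -> exists u, is_matrix_game_value (S lam u) u.
Proof.
by move=> lam01; apply: (fixed_point_exists G Q W Q_unit lam01) => v; exact: two_column_value.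
Qed.

Lemma disc_value_le lam v : 0 < lam <= 1 ->
  (exists2 t, 0 <= t <= 1 & forall i, E lam v t i <= 0) -> disc_value G Q W lam <= v.
Proof.
move=> lam01 [t t01 neg]; have [u fix_u] := two_column_fixed_point lam01.
rewrite (disc_value_fixed G Q W Q_unit lam01 fix_u).
apply: (fixed_point_le G Q W Q_unit lam01 fix_u).
exists (pair_mix t ord0 ord_max); split; first exact: pair_mix_mixed.
by move=> i; rewrite -subr_le0 shapley_pair_mix.
Qed.

Lemma disc_value_ge lam v : 0 < lam <= 1 ->
  (forall t, 0 <= t <= 1 -> exists i, 0 <= E lam v t i) -> v <= disc_value G Q W lam.
Proof.
move=> lam01 pos; have [u fix_u] := two_column_fixed_point lam01.
rewrite (disc_value_fixed G Q W Q_unit lam01 fix_u).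
apply: (fixed_point_ge G Q W Q_unit lam01 fix_u) => y ymix.
have [t t01 ->] := mixed_two_columns n_le1 y ymix.
by have [i Hi] := pos t t01; exists i; rewrite -subr_ge0 shapley_pair_mix.
Qed.

Lemma limit_candidate : (forall i j, rational (G i j)) -> (forall i j, rational (W i j)) ->
  exists VA VB VC, [/\ line_game_value interior0 interior1 VA, line_game_value interior1 cell1 VB,
    line_game_value interior0 cell0 VC & rational (Num.min VA (Num.min VB VC))].
Proof.
move=> ratG ratW.
have rat_int j k i :
    rational (interior_end (absorbing j i) (absorbing k i) (g j i) (w j i) (w k i)).
  by apply: rational_interior_end; [apply: ratG | apply: ratW | apply: ratW].
have rat_cell j i : rational (cell_payoff (absorbing j i) (g j i) (w j i)).
  by apply: rational_cell_payoff; [apply: ratG | apply: ratW].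
have [VA [lineA bpA]] := line_game_value_exists interior0 interior1.
have [VB [lineB bpB]] := line_game_value_exists interior1 cell1.
have [VC [lineC bpC]] := line_game_value_exists interior0 cell0.
exists VA, VB, VC; split=> //; apply: rational_min; [|apply: rational_min].
- by apply: (breakpoint_rational _ _ _ _ _ bpA) => i; exact: rat_int.
- by apply: (breakpoint_rational _ _ _ _ _ bpB) => i; [exact: rat_int | exact: rat_cell].
- by apply: (breakpoint_rational _ _ _ _ _ bpC) => i; [exact: rat_int | exact: rat_cell].
Qed.

Theorem two_column_limit : (forall i j, rational (G i j)) -> (forall i j, rational (W i j)) ->
  exists r : rat, disc_value G Q W @ (0 : R)^'+ --> (ratr r : R).
Proof.
move=> ratG ratW; have [VA [VB [VC [lineA lineB lineC [r r0E]]]]] := limit_candidate ratG ratW.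
exists r; rewrite -r0E; apply/cvgrPdist_le => e e0; near=> lam.
have lam01 : 0 < lam <= 1 by near: lam; exact: near0_bounded.
rewrite distrC ler_distl; apply/andP; split.
  apply: disc_value_ge lam01 _; near: lam; apply: (limit_lower lineA lineB lineC); lra.
apply: disc_value_le lam01 _; near: lam; apply: (limit_upper lineA lineB lineC); lra.
Unshelve. all: by end_near.
Qed.

End TwoColumnLimit.

Section Transposition.
Context {R : realType} {m n : nat} (G Q W : 'M[R]_(m, n)).

Local Notation G' := (\matrix_(j, i) - G i j).
Local Notation Q' := (\matrix_(j, i) Q i j).
Local Notation W' := (\matrix_(j, i) - W i j).

Lemma shapley_mx_opp_trmx lam v :
  \matrix_(j, i) - shapley_mx G Q W lam (- v) i j = shapley_mx G' Q' W' lam v.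
Proof. by apply/matrixP => j i; rewrite !mxE; ring. Qed.

Lemma disc_value_opp_trmx lam : 0 < lam <= 1 -> (forall i j, 0 <= Q i j <= 1) ->
    (exists u, is_matrix_game_value (shapley_mx G' Q' W' lam u) u) ->
  disc_value G Q W lam = - disc_value G' Q' W' lam.
Proof.
move=> lam01 Q_unit [u fix_u].
have Q'_unit j i : 0 <= Q' j i <= 1 by rewrite mxE.
have fix_opp : is_matrix_game_value (shapley_mx G Q W lam (- u)) (- u).
  by apply: value_opp_trmx; rewrite shapley_mx_opp_trmx.
rewrite (disc_value_fixed _ _ _ Q'_unit lam01 fix_u).
by rewrite (disc_value_fixed _ _ _ Q_unit lam01 fix_opp).
Qed.

End Transposition.

Lemma two_row_limit {R : realType} {m n : nat} (G Q W : 'M[R]_(m.+1, n.+1)) :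
    (m <= 1)%N -> (forall i j, Q i j = 0 \/ Q i j = 1) ->
    (forall i j, rational (G i j)) -> (forall i j, rational (W i j)) ->
  exists r : rat, disc_value G Q W @ (0 : R)^'+ --> (ratr r : R).
Proof.
move=> m_le1 Q01 ratG ratW.
have Q'01 j i : (\matrix_(j, i) Q i j) j i = 0 \/ (\matrix_(j, i) Q i j) j i = 1 by rewrite mxE.
have rat_opp (A : 'M[R]_(m.+1, n.+1)) : (forall i j, rational (A i j)) ->
    forall j i, rational ((\matrix_(j, i) - A i j) j i).
  by move=> ratA j i; rewrite mxE; have [r ->] := ratA i j; exists (- r); rewrite rmorphN.
have [r lim'] := two_column_limit m_le1 _ _ _ Q'01 (rat_opp _ ratG) (rat_opp _ ratW).
exists (- r); rewrite rmorphN; apply: cvg_trans (cvgN lim'); apply: near_eq_cvg.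
near=> lam; have lam01 : 0 < lam <= 1 by near: lam; exact: near0_bounded.
rewrite /= (disc_value_opp_trmx G Q W lam lam01 (fun i j => zero_one_unit (Q01 i j))) ?opprK //.
exact: (two_column_fixed_point m_le1 _ _ _ Q'01 lam01).
Unshelve. all: by end_near.
Qed.

Theorem theorem1 (R : realType) (m n : nat) (g q w : 'M[rat]_(m, n)) :
  (0 < m)%N -> (0 < n)%N ->
  (forall i j, q i j = 0 \/ q i j = 1) ->
  (minn m n < 3)%N ->
  exists r : rat,
    (fun lam : R =>
       disc_value (map_mx (fun a : rat => (ratr a : R)) g)
                  (map_mx (fun a : rat => (ratr a : R)) q)
                  (map_mx (fun a : rat => (ratr a : R)) w) lam)
      @ (0 : R)^'+ --> (ratr r : R).
Proof.
case: m g q w => [|m] //; case: n => [|n] // g q w _ _ q01 small.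
set ratR := fun a : rat => (ratr a : R).
have Q01 i j : map_mx ratR q i j = 0 \/ map_mx ratR q i j = 1.
  by rewrite mxE /ratR; case: (q01 i j) => ->; [left; rewrite rmorph0 | right; rewrite rmorph1].
have rat_map (A : 'M[rat]_(m.+1, n.+1)) i j : rational (map_mx ratR A i j).
  by exists (A i j); rewrite mxE.
have [m_le1|n_le1] : (m <= 1)%N \/ (n <= 1)%N.
  by move: small; rewrite ltnS geq_min !ltnS => /orP.
- exact: two_row_limit _ _ _ m_le1 Q01 (rat_map g) (rat_map w).
- exact: two_column_limit n_le1 _ _ _ Q01 (rat_map g) (rat_map w).
Qed.
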